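(* Let $K(t,x,z)=\sum_{S} t^{\mathrm{da}(S)}x^{m(S)}z^{|S|}$, where the sum runs over all compositions $S$ (of all nonnegative integers $n$, including the empty composition of $0$), $m(S)$ is the number of parts of $S$ and $|S|$ is the sum of its parts. Then, as formal power series, $$K(t,x,z)=\frac{(1-z+xz)(1-z^2)}{(1-z)(1-(1+x^2)z^2)-2tx^2z^3}.$$
   Context: A composition of $n$ with $m$ parts is a sequence $(a_1,\dots,a_m)$ of positive integers with $m\ge 0$ and $a_1+\dots+a_m=n$. For a finite sequence $S=(a_1,\dots,a_m)$, the degree of asymmetry is $\mathrm{da}(S)=|\{i: 1\le i\le m/2,\ a_i\neq a_{m+1-i}\}|$. *)

From mathcomp Require Import all_boot all_order all_algebra.
Set Implicit Arguments. Unset Strict Implicit. Unset Printing Implicit Defensive.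
Import GRing.Theory.
Local Open Scope ring_scope.

Definition is_composition (n : nat) (s : seq nat) : bool :=
  all (fun a => 0 < a)%N s && (sumn s == n).

(* degree of asymmetry: #{ i : 1 <= i <= m/2, a_i <> a_{m+1-i} } (0-indexed here) *)
Definition da (s : seq nat) : nat :=
  count (fun i => nth 0%N s i != nth 0%N s (size s - 1 - i)) (iota 0 (size s)./2).

(* Every composition of n has m <= n parts, each <= n, so
   it is enumerated exactly once as an m.-tuple of 'I_n.+1 with m < n.+1. *)
Definition Kcoef (R : comRingType) (t x : R) (n : nat) : R :=
  \sum_(m < n.+1)
     \sum_(s : m.-tuple 'I_n.+1 | is_composition n (map val s))
        t ^+ da (map val s) * x ^+ m.

Definition Knum (R : comRingType) (t x : R) : {poly R} :=
  (1 - 'X + x%:P * 'X) * (1 - 'X ^+ 2).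

Definition Kden (R : comRingType) (t x : R) : {poly R} :=
  (1 - 'X) * (1 - (1 + x ^+ 2)%:P * 'X ^+ 2) - (2 * t * x ^+ 2)%:P * 'X ^+ 3.

From mathcomp Require Import all_boot all_order all_algebra zify ring.
Set Implicit Arguments.
Unset Strict Implicit.
Unset Printing Implicit Defensive.
Import GRing.Theory.
Local Open Scope ring_scope.

(* A composition with at least two parts is a :: s ++ [b] with a, b > 0 and s
   a composition of n - a - b, and da (a :: s ++ [b]) = [a != b] + da s. Hence
   K = 1 + x z/(1 - z) + x^2 A K with
     A = \sum_(a, b >= 1) t^[a != b] z^(a + b)
       = t (z/(1 - z))^2 + (1 - t) z^2/(1 - z^2).
   Multiplying by (1 - z)(1 - z^2) turns A into z^2 (1 + (2t - 1) z) and
   1 + x z/(1 - z) into the numerator, which gives the identity. Power series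
   are handled through their truncations below degree N, so each identity
   holds up to a multiple of 'X^N. *)

Lemma is_composition_cons_rcons n a b s :
  is_composition n (a :: rcons s b) =
  [&& 0 < a, 0 < b, a + b <= n & is_composition (n - a - b) s]%N.
Proof.
rewrite /is_composition /= all_rcons sumn_rcons.
case: (0 < a)%N (0 < b)%N (all _ s) => [] [] [] //=; rewrite ?andbF //.
by apply/eqP/andP => [sum_n | [le_abn /eqP sum_s]]; [split; [|apply/eqP] |]; lia.
Qed.

Lemma composition_bounds n s :
  is_composition n s -> (size s <= n)%N && all (fun a => a <= n)%N s.
Proof.
case/andP=> + /eqP <-; elim: s => //= a s IH /andP[a_gt0 /IH /andP[size_s parts_s]].
rewrite leq_addr -addn1 addnC leq_add //=.
by apply: sub_all parts_s => c /leq_trans; apply; rewrite leq_addl.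
Qed.

Lemma da_cons_rcons a b s : da (a :: rcons s b) = ((a != b) + da s)%N.
Proof.
rewrite /da /= size_rcons.
rewrite (_ : iota 0 _ = 0 :: map (addn 1) (iota 0 (size s)./2)); last by rewrite -iotaDl.
rewrite /= nth_rcons ltnn eqxx count_map; congr (_ + _)%N.
apply: eq_in_count => i; rewrite mem_iota gtn_half_double => /andP[_ lt_i] /=.
rewrite (_ : ((size s).+2 - 1 - (1 + i) = (size s - 1 - i).+1)%N); last by lia.
by rewrite /= !nth_rcons !ifT //; lia.
Qed.

Definition compositions n : seq (seq nat) :=
  [seq s <- [seq map val (tagged p) | p : {m : 'I_n.+1 & m.-tuple 'I_n.+1}]
     | is_composition n s].

Lemma mem_compositions n s : (s \in compositions n) = is_composition n s.
Proof.
rewrite mem_filter andb_idr // => comp_s.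
have /andP[size_s parts_s] := composition_bounds comp_s.
have size_inord : size (map (@inord n) s) == Ordinal (size_s : size s < n.+1)%N.
  by rewrite size_map.
apply/mapP; exists (Tagged (fun m : 'I_n.+1 => m.-tuple 'I_n.+1) (Tuple size_inord)).
  by rewrite mem_enum.
rewrite /= -map_comp map_id_in // => a /(allP parts_s) le_an /=.
exact: inordK.
Qed.

Lemma compositions_uniq n : uniq (compositions n).
Proof.
apply: filter_uniq; rewrite map_inj_uniq ?enum_uniq // => -[m s] [m' s'] /= eq_ss'.
have eq_mm' : m = m'.
  by apply: val_inj; rewrite /= -(size_tuple s) -(size_tuple s') -!(size_map val) eq_ss'.
case: m' / eq_mm' s' eq_ss' => s' /(inj_map val_inj) eq_ss'.
by congr (Tagged _ _); apply: val_inj.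
Qed.

Definition compositions_by_ends N n : seq (seq nat) :=
  (if n is 0 then [:: [::]] else [:: [:: n]]) ++
  [seq ab.1 :: rcons s ab.2
     | ab <- [seq (a, b) | a <- index_iota 1 N, b <- index_iota 1 N],
       s <- if (ab.1 + ab.2 <= n)%N then compositions (n - ab.1 - ab.2) else [::]].

Lemma mem_compositions_by_ends N n s : (n < N)%N ->
  (s \in compositions_by_ends N n) = is_composition n s.
Proof.
move=> lt_nN; rewrite mem_cat.
set outer := (X in _ || (_ \in X)).
have outer_short s' : (size s' <= 1)%N -> (s' \in outer) = false.
  move=> short_s'; apply/allpairsPdep=> -[ab [s'' [_ _ eq_s']]].
  by rewrite eq_s' /= size_rcons in short_s'.
case: s => [|a s]; last case/lastP: s => [|s b].
- rewrite outer_short // orbF.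
  by case: n {lt_nN outer outer_short} => [|n]; rewrite inE.
- rewrite outer_short // orbF /is_composition /= addn0 andbT.
  case: n {lt_nN outer outer_short} => [|n]; rewrite inE ?eqseq_cons ?andbT.
    by rewrite andbC; case: (a =P 0) => [->|].
  by rewrite andb_idl // => /eqP ->.
rewrite is_composition_cons_rcons -mem_compositions.
have -> : (a :: rcons s b \in if n is 0 then [:: [::]] else [:: [:: n]]) = false.
  by case: n {lt_nN outer outer_short} => [|n]; apply/negbTE;
    rewrite inE; apply/eqP => /(congr1 size); rewrite /= size_rcons.
apply/allpairsPdep/and4P => /= [[[a' b'] [s' []]] | [a_gt0 b_gt0 le_abn comp_s]].
  move=> /allpairsP[[a'' b''] [/= a'_in b'_in [-> ->]]] /=.
  rewrite !mem_index_iota in a'_in b'_in.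
  by case: ifP => // le_abn comp_s' [-> /rcons_inj[-> ->]]; split; lia.
exists (a, b), s; rewrite /= le_abn; split => //.
by apply: allpairs_f; rewrite mem_index_iota; lia.
Qed.

Lemma compositions_by_ends_uniq N n : uniq (compositions_by_ends N n).
Proof.
rewrite cat_uniq; apply/and3P; split.
- by case: n.
- apply/hasPn => _ /allpairsPdep[ab [s [_ _ ->]]].
  by case: n => [|n]; rewrite inE; apply/eqP => /(congr1 size); rewrite /= size_rcons.
apply: allpairs_uniq_dep.
- by apply: allpairs_uniq; rewrite ?iota_uniq // => -[a b] [a' b'].
- by move=> ab _; case: ifP => // _; exact: compositions_uniq.
by move=> [[a b] s] [[a' b'] s'] _ _ [-> /rcons_inj[-> ->]].
Qed.

Section Kcoef.
Variables (R : comRingType) (t x : R).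

Definition Kweight (s : seq nat) : R := t ^+ da s * x ^+ size s.

Lemma Kcoef_compositions n : Kcoef t x n = \sum_(s <- compositions n) Kweight s.
Proof.
rewrite big_filter big_image_cond /Kcoef sig_big_dep; apply: eq_big => // -[m s] _.
by rewrite /Kweight size_map size_tuple.
Qed.

Lemma Kcoef_enum n L : uniq L -> (forall s, (s \in L) = is_composition n s) ->
  Kcoef t x n = \sum_(s <- L) Kweight s.
Proof.
move=> uniq_L mem_L; rewrite Kcoef_compositions; apply/perm_big/uniq_perm => //.
  exact: compositions_uniq.
by move=> s; rewrite mem_compositions mem_L.
Qed.

Lemma Kcoef_rec N n : (n < N)%N ->
  Kcoef t x n = (if n == 0%N then 1 else x) +
    x ^+ 2 * \sum_(1 <= a < N) \sum_(1 <= b < N | (a + b <= n)%N)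
               t ^+ (a != b) * Kcoef t x (n - a - b).
Proof.
move=> lt_nN.
rewrite (Kcoef_enum (compositions_by_ends_uniq N n)
                    (fun s => mem_compositions_by_ends s lt_nN)).
rewrite big_cat big_allpairs_dep big_allpairs /=; congr (_ + _).
  by case: n {lt_nN} => [|n]; rewrite big_seq1 /Kweight /= mul1r.
rewrite mulr_sumr; apply: eq_bigr => a _.
rewrite mulr_sumr [RHS]big_mkcond; apply: eq_bigr => b _ /=.
case: ifP => _; last by rewrite big_nil.
rewrite Kcoef_compositions !mulr_sumr; apply: eq_bigr => s _.
by rewrite /Kweight da_cons_rcons /= size_rcons exprD !exprS; ring.
Qed.

End Kcoef.

Lemma geometric_sum (R : comRingType) (z : R) N : (0 < N)%N ->
  (1 - z) * \sum_(1 <= a < N) z ^+ a = z - z ^+ N.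
Proof.
case: N => // N _; rewrite big_add1 /= big_mkord.
under eq_bigr do rewrite exprS.
by rewrite -mulr_sumr mulrCA -opprB mulNr -subrX1 opprB mulrBr mulr1 -exprS.
Qed.

Lemma poly_eq_modXn (R : comRingType) N (p q : {poly R}) :
  (forall i, (i < N)%N -> p`_i = q`_i) -> exists r, p = q + r * 'X^N.
Proof.
move=> eq_pq; exists (drop_poly N (p - q)).
have take0 : take_poly N (p - q) = 0.
  apply/polyP => i; rewrite coef_take_poly coefB coef0.
  by case: ifP => // /eq_pq ->; rewrite subrr.
by rewrite -[drop_poly _ _ * _]add0r -take0 poly_take_drop addrC subrK.
Qed.

(* K = E / (1 - c A) modulo m, and P clears the denominators of A and E. *)
Lemma clear_denominators_mod (R : comRingType) (m K E A P B Nm c : R) :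
    (exists r, K = E + c * A * K + r * m) ->
    (exists r, P * A = B + r * m) -> (exists r, P * E = Nm + r * m) ->
  exists r, (P - c * B) * K = Nm + r * m.
Proof.
move=> [rK eK] [rA eA] [rE eE]; exists (rE + c * rA * K + P * rK).
have -> : B = P * A - rA * m by rewrite eA addrK.
have -> : Nm = P * E - rE * m by rewrite eE addrK.
have -> : E = K - c * A * K - rK * m by rewrite [X in X - _ - _]eK; ring.
ring.
Qed.

Section KSeries.
Variables (R : comRingType) (t x : R).

Definition Kpoly N : {poly R} := \poly_(i < N) Kcoef t x i.

Definition geomX N : {poly R} := \sum_(1 <= a < N) 'X^a.

Definition pairs_poly N : {poly R} :=
  \sum_(1 <= a < N) \sum_(1 <= b < N) (t ^+ (a != b))%:P * 'X^(a + b).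

Lemma coef_geomX N i : (geomX N)`_i = if (0 < i < N)%N then 1 else 0.
Proof.
rewrite coef_sum (eq_bigr (fun a => if a == i then 1 else 0)) => [|a _].
  by rewrite -big_mkcond big_nat1_eq.
by rewrite coefXn eq_sym; case: eqP.
Qed.

Lemma coef_pairs_polyM N p n : (pairs_poly N * p)`_n =
  \sum_(1 <= a < N) \sum_(1 <= b < N | (a + b <= n)%N) t ^+ (a != b) * p`_(n - a - b).
Proof.
rewrite mulr_suml coef_sum; apply: eq_big => // a _.
rewrite mulr_suml coef_sum [RHS]big_mkcond; apply: eq_bigr => b _.
by rewrite -mulrA coefCM coefXnM subnDA; case: leqP; rewrite ?mulr0.
Qed.

Lemma pairs_polyE N : pairs_poly N =
  t%:P * geomX N ^+ 2 + (1 - t)%:P * \sum_(1 <= a < N) ('X^2) ^+ a.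
Proof.
rewrite /geomX expr2 mulr_suml !mulr_sumr -big_split; apply: eq_big_seq => a a_in /=.
have diag b : (t ^+ (a != b))%:P * 'X^(a + b) =
    t%:P * ('X^a * 'X^b) + (if b == a then (1 - t)%:P * 'X^(a + b) else 0).
  by case: eqVneq => [->|_]; rewrite /= exprD; ring.
rewrite (eq_bigr _ (fun b _ => diag b)) big_split /= -big_mkcond big_nat1_eq.
by rewrite -mem_index_iota a_in -!mulr_sumr -exprM mul2n -addnn exprD.
Qed.

Lemma Kpoly_eq N : exists r, Kpoly N =
  1 + x%:P * geomX N + (x ^+ 2)%:P * pairs_poly N * Kpoly N + r * 'X^N.
Proof.
apply: poly_eq_modXn => i lt_iN.
rewrite coef_poly lt_iN (Kcoef_rec t x lt_iN) !coefD coef1 coefCM coef_geomX.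
rewrite -mulrA coefCM coef_pairs_polyM lt_iN; congr (_ + x ^+ 2 * _).
  by case: i {lt_iN} => [|i]; rewrite ?mulr0 ?addr0 ?mulr1 ?add0r.
apply: eq_bigr => a _; apply: eq_bigr => b _.
by rewrite coef_poly (leq_ltn_trans _ lt_iN) // -subnDA leq_subr.
Qed.

Lemma Kden_Kpoly N : (0 < N)%N -> exists r, Kden t x * Kpoly N = Knum t x + r * 'X^N.
Proof.
move=> N_gt0.
have -> : Kden t x =
    (1 - 'X) * (1 - 'X^2) - (x ^+ 2)%:P * ('X^2 * (1 + (2 * t - 1)%:P * 'X)).
  by rewrite /Kden; ring.
apply: clear_denominators_mod (Kpoly_eq N) _ _.
  exists (t%:P * (1 + 'X) * ('X^N - 2 * 'X) - (1 - t)%:P * (1 - 'X) * 'X^N).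
  rewrite pairs_polyE; transitivity (t%:P * (1 + 'X) * ((1 - 'X) * geomX N) ^+ 2
    + (1 - t)%:P * (1 - 'X) * ((1 - 'X^2) * \sum_(1 <= a < N) ('X^2) ^+ a)); first by ring.
  by rewrite !geometric_sum // exprAC; ring.
exists (- x%:P * (1 - 'X^2)).
transitivity ((1 - 'X^2) * (1 - 'X + x%:P * ((1 - 'X) * geomX N))); first by ring.
by rewrite geometric_sum // /Knum; ring.
Qed.

End KSeries.

Theorem proposition2p1 (R : comRingType) (t x : R) (n : nat) :
  \sum_(i < n.+1) (Kden t x)`_i * Kcoef t x (n - i) = (Knum t x)`_n.
Proof.
have [r eq_Kden] := Kden_Kpoly t x (ltn0Sn n).
have := congr1 (fun p : {poly R} => p`_n) eq_Kden.
rewrite /= coefD coefMXn ltnSn addr0 => <-.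
by rewrite coefM; apply: eq_bigr => i _; rewrite coef_poly ltnS leq_subr.
Qed.
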